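(* Let $G$ be a finite connected simple graph with $n$ vertices and $m\ge n$ edges, $a,b\in\mathbb{C}$, $c=a-b$, $\mathbf d:\ell^2(R(G))\to\ell^2(V(G))$ linear with $\mathbf d\mathbf d^*=\mathbf I_n$, $\mathbf C=a\,\mathbf d^*\mathbf d+b(\mathbf I_{2m}-\mathbf d^*\mathbf d)$ and $\mathbf U=\mathbf S\mathbf C$. Then the eigenvalues of $\mathbf U$ (with algebraic multiplicity) are: (1) $2n$ eigenvalues $\lambda=\frac{c\mu\pm\sqrt{c^2\mu^2+4ab}}{2}$, one pair for each eigenvalue $\mu$ (counted with multiplicity) of the $n\times n$ matrix $\mathbf d\mathbf S\mathbf d^*$; (2) the remaining $2(m-n)$ eigenvalues are $b$ and $-b$, each with multiplicity $m-n$.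
   Context: For a simple graph $G$, $R(G)=\{(u,v),(v,u): uv\in E(G)\}$ is the set of arcs (so $|R(G)|=2m$); for $e=(u,v)$, $e^{-1}=(v,u)$. $\ell^2(V(G))\cong\mathbb{C}^n$ and $\ell^2(R(G))\cong\mathbb{C}^{2m}$ with standard inner products; $\mathbf d^*$ is the adjoint of $\mathbf d$. $\mathbf S$ is the arc-reversal operator on $\ell^2(R(G))$: $(\mathbf S\omega)(e)=\omega(e^{-1})$. $\mathbf I_k$ is the identity of size $k$. *)

From HB Require Import structures.
From mathcomp Require Import all_boot all_order all_algebra all_field.
Set Implicit Arguments. Unset Strict Implicit. Unset Printing Implicit Defensive.
Import Order.TTheory GRing.Theory Num.Theory.
Local Open Scope ring_scope.

Definition simple_graph (n : nat) (e : rel 'I_n) : Prop :=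
  symmetric e /\ irreflexive e.

Definition connected_graph (n : nat) (e : rel 'I_n) : Prop :=
  forall u v : 'I_n, connect e u v.

Definition nedges (n : nat) (e : rel 'I_n) : nat :=
  #|[set p : 'I_n * 'I_n | e p.1 p.2 && (p.1 < p.2)%N]|.

Definition arc (n : nat) (e : rel 'I_n) := {p : 'I_n * 'I_n | e p.1 p.2}.

(* number of arcs; l^2(R(G)) is identified with algC^(narcs e) via enum_val *)
Definition narcs (n : nat) (e : rel 'I_n) : nat := #|{: arc e}|.

(* arc reversal operator S: (S w)(x) = w(x^{-1}), i.e. S_{x,y} = [y = x^{-1}] *)
Definition arc_rev_mx (n : nat) (e : rel 'I_n) : 'M[algC]_(narcs e) :=
  \matrix_(i, j)
    ((((val (enum_val i)).1 == (val (enum_val j)).2) &&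
      ((val (enum_val i)).2 == (val (enum_val j)).1))%:R).

Definition adjmx (p q : nat) (d : 'M[algC]_(p, q)) : 'M[algC]_(q, p) :=
  (map_mx (@Num.conj _) d)^T.

From Pilot Require Import Defs.
From HB Require Import structures.
From mathcomp Require Import all_boot all_order all_algebra all_field.
From mathcomp Require Import perm ring.
Import Order.TTheory GRing.Theory Num.Theory.
Local Open Scope ring_scope.

Set Implicit Arguments.
Unset Strict Implicit.
Unset Printing Implicit Defensive.

(* Write U = b S + c S d^* d and Y = X + b S.  Since S^2 = 1, (X - U) Y = lam - A B
   with lam = X^2 - b^2, A = c S d^* and B = d Y, while B A = c (X d S d^* + b)
   because d d^* = 1.  Sylvester's identity lam^n det(lam - A B) = lam^(2m) det(lam - B A)
   turns char U * det Y into a determinant in d S d^*, which factors over its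
   eigenvalues mu as prod (X^2 - a b - c X mu).  Finally S is the permutation matrix
   of a fixed-point-free involution of the 2m arcs, so its eigenvalues are +1 and -1,
   m times each, and det Y = lam^m. *)

Lemma det_scalar_sub_mulmxC (R : comNzRingType) p q
    (A : 'M[R]_(p, q)) (B : 'M[R]_(q, p)) (l : R) :
  l ^+ q * \det (l%:M - A *m B) = l ^+ p * \det (l%:M - B *m A).
Proof.
pose N := block_mx (l%:M : 'M_p) A B (1%:M : 'M_q).
have elim_lower : block_mx 1%:M (- A) 0 l%:M *m N
                  = block_mx (l%:M - A *m B) 0 (l *: B) (l%:M : 'M_q).
  rewrite mulmx_block !mul1mx !mul0mx !add0r mulmx1 mul_scalar_mx mulNmx.
  by rewrite subrr mulmx1.
have elim_upper : block_mx 1%:M 0 (- B) l%:M *m N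
                  = block_mx (l%:M : 'M_p) A 0 (l%:M - B *m A).
  rewrite mulmx_block !mul1mx !mul0mx !addr0.
  by rewrite mulNmx scalar_mxC addNr mulmx1 addrC mulNmx.
have := congr1 determinant elim_lower; have := congr1 determinant elim_upper.
rewrite !det_mulmx !det_ublock !det_lblock !det1 !mul1r !det_scalar => <- ->.
by rewrite mulrC.
Qed.

Lemma det_scalar_sub_scale_trig (R : comNzRingType) k (T : 'M[R]_k) (p q : R) :
  is_trig_mx T -> \det (p%:M - q *: T) = \prod_i (p - q * T i i).
Proof.
move=> /is_trig_mxP T_trig; rewrite det_trig.
  by apply: eq_bigr => i _; rewrite !mxE eqxx.
apply/is_trig_mxP => i j lt_ij; rewrite !mxE (T_trig _ _ lt_ij).
by rewrite -val_eqE ltn_eqF // mulr0 subr0.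
Qed.

Lemma det_scalar_sub_scale_conj (R : comUnitRingType) k (A P : 'M[R]_k) (p q : R) :
  P \in unitmx -> \det (p%:M - q *: (P *m A *m invmx P)) = \det (p%:M - q *: A).
Proof.
move=> P_unit.
have -> : p%:M - q *: (P *m A *m invmx P) = P *m (p%:M - q *: A) *m invmx P.
  rewrite mulmxBr mulmxBl mul_mx_scalar -scalemxAl mulmxV // scalemx1.
  by rewrite -scalemxAr -scalemxAl.
by rewrite !det_mulmx mulrAC -det_mulmx mulmxV // det1 mul1r.
Qed.

Lemma exists_trig_conj k (A : 'M[algC]_k) :
  exists2 P, P \in unitmx & is_trig_mx (P *m A *m invmx P).
Proof.
case: k A => [|k] A.
  by exists 1%:M; rewrite ?unitmx1 //; apply/is_trig_mxP => -[].
have [P P_unitary PA_trig] := @Schur algC k.+1 A isT.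
have P_unit := unitarymx_unit P_unitary.
by exists P; rewrite // -conjumx.
Qed.

Section TrigConj.
Variables (k : nat) (A P : 'M[algC]_k).
Hypotheses (P_unit : P \in unitmx) (T_trig : is_trig_mx (P *m A *m invmx P)).
Local Notation T := (P *m A *m invmx P).

Lemma det_scalar_sub_scale_polyC (p q : {poly algC}) :
  \det (p%:M - q *: map_mx polyC A) = \prod_i (p - q * (T i i)%:P).
Proof.
rewrite -(@det_scalar_sub_scale_conj _ _ _ (map_mx polyC P)) ?map_unitmx //.
rewrite -map_invmx -!map_mxM det_scalar_sub_scale_trig.
  by apply: eq_bigr => i _; rewrite mxE.
by apply/is_trig_mxP => i j lt_ij; rewrite mxE (is_trig_mxP T_trig _ _ lt_ij).
Qed.

Lemma mxtrace_trig_conj : \tr A = \sum_i T i i.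
Proof. by rewrite -/(\tr T) mxtrace_mulC mulmxA mulVmx // mul1mx. Qed.

Lemma trig_conj_diag_sqr : A *m A = 1%:M -> forall i, T i i ^+ 2 = 1.
Proof.
move=> AA i; have T2 : T *m T = 1%:M.
  by rewrite !mulmxA mulmxKV // -(mulmxA P) AA mulmx1 mulmxV.
have -> : 1 = (1%:M : 'M[algC]_k) i i by rewrite mxE eqxx.
rewrite expr2 -T2 [RHS]mxE (bigD1 i) //= big1 ?addr0 // => j ne_ji.
have /is_trig_mxP Tt := T_trig.
case: (ltngtP i j) => [/Tt -> | /Tt -> | /val_inj eq_ij]; rewrite ?mul0r ?mulr0 //.
by rewrite eq_ij eqxx in ne_ji.
Qed.

End TrigConj.

Lemma det_scalar_sub_scale_char_roots k (A : 'M[algC]_k) (s : seq algC) :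
  char_poly A = \prod_(mu <- s) ('X - mu%:P) -> forall p q : {poly algC},
  \det (p%:M - q *: map_mx polyC A) = \prod_(mu <- s) (p - q * mu%:P).
Proof.
move=> charA p q; have [P P_unit T_trig] := exists_trig_conj A.
have eigs : perm_eq s [seq (P *m A *m invmx P) i i | i <- index_enum 'I_k].
  apply: prod_XsubC_eq; rewrite -charA big_map /char_poly /char_poly_mx.
  rewrite -[map_mx _ A]scale1r (det_scalar_sub_scale_polyC P_unit T_trig).
  by apply: eq_bigr => i _; rewrite mul1r.
by rewrite (perm_big _ eigs) big_map (det_scalar_sub_scale_polyC P_unit T_trig).
Qed.

Lemma prod_XaddC_sign (N m : nat) (t : 'I_N -> algC) (b : algC) :
  N = (m + m)%N -> (forall i, t i ^+ 2 = 1) -> \sum_i t i = 0 ->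
  \prod_i ('X + (b * t i)%:P) = ('X ^+ 2 - b%:P ^+ 2) ^+ m.
Proof.
move=> N_double t_sqr t_sum.
pose pos := [pred i | t i == 1].
have t_neg i : t i != 1 -> t i = -1.
  by move=> t_neq1; have /eqP := t_sqr i; rewrite sqrf_eq1 (negbTE t_neq1) => /eqP.
have card_pos : #|pos| = #|[predC pos]|.
  move: t_sum; rewrite (bigID pos) /=.
  rewrite (eq_bigr (fun=> 1)) => [|i /eqP //].
  rewrite [X in _ + X](eq_bigr (fun=> -1)) => [|i /t_neg //].
  by rewrite !sumr_const mulNrn => /eqP; rewrite subr_eq0 eqr_nat => /eqP.
have card_pos_m : #|pos| = m.
  have := cardC pos; rewrite card_ord -card_pos => card_N.
  by apply: double_inj; rewrite -!addnn card_N.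
rewrite (bigID pos) /=.
rewrite (eq_bigr (fun=> 'X + b%:P)) => [|i /eqP ->]; last by rewrite mulr1.
rewrite [X in _ * X](eq_bigr (fun=> 'X - b%:P)) => [|i /t_neg ->]; last first.
  by rewrite mulrN1 polyCN.
rewrite !prodr_const card_pos_m -card_pos card_pos_m -exprMn.
by congr (_ ^+ _); ring.
Qed.

Lemma mul_XsubC_quadratic_roots (C : numClosedFieldType) (p q : C) :
  ('X - ((q + sqrtC (q ^+ 2 + 4 * p)) / 2)%:P) *
  ('X - ((q - sqrtC (q ^+ 2 + 4 * p)) / 2)%:P) = 'X ^+ 2 - q%:P * 'X - p%:P.
Proof.
set r := sqrtC _; have r_sqr : r ^+ 2 = q ^+ 2 + 4 * p by rewrite sqrtCK.
have two_neq0 : (2 : C) != 0 by rewrite pnatr_eq0.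
have sum_roots : (q + r) / 2 + (q - r) / 2 = q by field.
have prod_roots : (q + r) / 2 * ((q - r) / 2) = - p.
  have -> : (q + r) / 2 * ((q - r) / 2) = (q ^+ 2 - r ^+ 2) / 4 by field.
  by rewrite r_sqr; field.
have -> u v : ('X - u%:P) * ('X - v%:P)
              = 'X ^+ 2 - (u + v)%:P * 'X + (u * v)%:P :> {poly C}.
  by rewrite polyCD polyCM; ring.
by rewrite sum_roots prod_roots polyCN; ring.
Qed.

Lemma det_resolvent (R : comNzRingType) (N k : nat) (S : 'M[R]_N)
    (D : 'M[R]_(k, N)) (E : 'M[R]_(N, k)) (a b x : R) :
  S *m S = 1%:M -> D *m E = 1%:M ->
  let U := S *m (a *: (E *m D) + b *: (1%:M - E *m D)) in
  (x ^+ 2 - b ^+ 2) ^+ k * (\det (x%:M - U) * \det (x%:M + b *: S))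
  = (x ^+ 2 - b ^+ 2) ^+ N *
    \det ((x ^+ 2 - a * b)%:M - ((a - b) * x) *: (D *m S *m E)).
Proof.
move=> SS DE U; set l := x ^+ 2 - b ^+ 2; set Y := x%:M + b *: S.
pose A := (a - b) *: (S *m E); pose B := D *m Y.
have UE : U = b *: S + (a - b) *: (S *m E *m D).
  rewrite /U mulmxDr -!scalemxAr mulmxBr mulmx1 scalerBr scalerBl mulmxA.
  by rewrite addrCA addrA.
have YS : (x%:M - b *: S) *m Y = l%:M.
  rewrite mulmxBl !mulmxDr !mul_scalar_mx -!scalemxAl -!scalemxAr mul_mx_scalar.
  rewrite SS scalemx1 !scalerA !scale_scalar_mx [x * b]mulrC opprD addrA addrK.
  by rewrite -raddfB /=; congr (_%:M); rewrite /l; ring.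
have lhs : (x%:M - U) *m Y = l%:M - A *m B.
  by rewrite UE opprD addrA mulmxBl YS /A /B -!scalemxAl !mulmxA.
have YS_swap : Y *m S = x *: S + b%:M.
  by rewrite /Y mulmxDl mul_scalar_mx -scalemxAl SS scalemx1.
have BA : B *m A = (a - b) *: (x *: (D *m S *m E) + b%:M).
  rewrite /B /A -scalemxAr [D *m Y *m _]mulmxA -[D *m Y *m S]mulmxA YS_swap.
  by rewrite mulmxDr mulmxDl -scalemxAr -scalemxAl mul_mx_scalar -scalemxAl DE scalemx1.
have rhs : l%:M - B *m A = (x ^+ 2 - a * b)%:M - ((a - b) * x) *: (D *m S *m E).
  rewrite BA scalerDr !scalerA scale_scalar_mx opprD addrA addrAC -raddfB /=.
  by congr (_%:M - _); rewrite /l; ring.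
rewrite -det_mulmx lhs -rhs; exact: det_scalar_sub_mulmxC.
Qed.

Lemma mul_exp_cancel (R : idomainType) (l x y : R) (n m : nat) :
  l != 0 -> (n <= m)%N ->
  l ^+ n * (x * l ^+ m) = l ^+ (m + m) * y -> x = y * l ^+ (m - n).
Proof.
move=> l_neq0 le_nm eq_xy; apply: (mulfI (expf_neq0 (n + m) l_neq0)).
rewrite exprD -mulrA [l ^+ m * _]mulrC eq_xy mulrCA -!exprD mulrC.
by congr (_ * _ ^+ _); rewrite addnAC subnKC.
Qed.

Section ArcReversal.
Variables (n : nat) (e : rel 'I_n).
Hypothesis e_simple : simple_graph e.

Let e_sym : symmetric e := e_simple.1.

Definition arc_rev (x : Defs.arc e) : Defs.arc e :=
  exist _ ((val x).2, (val x).1) (etrans (e_sym _ _) (valP x)).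

Lemma arc_revK : involutive arc_rev.
Proof. by move=> [[u v] euv]; apply: val_inj. Qed.

Lemma arc_rev_neq x : arc_rev x != x.
Proof.
case: x => [[u v] euv]; apply/eqP => /(congr1 val) [eq_vu _].
by move: euv; rewrite /= eq_vu e_simple.2.
Qed.

Definition arc_rev_ord (i : 'I_(narcs e)) : 'I_(narcs e) :=
  enum_rank (arc_rev (enum_val i)).

Lemma arc_rev_ordK : involutive arc_rev_ord.
Proof. by move=> i; rewrite /arc_rev_ord enum_rankK arc_revK enum_valK. Qed.

Definition arc_rev_perm : 'S_(narcs e) := perm (inv_inj arc_rev_ordK).

Lemma arc_rev_permE i : enum_val (arc_rev_perm i) = arc_rev (enum_val i).
Proof. by rewrite permE enum_rankK. Qed.

Lemma arc_rev_mxE : arc_rev_mx e = perm_mx arc_rev_perm.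
Proof.
apply/matrixP => i j; rewrite /arc_rev_mx /perm_mx !mxE.
rewrite -(inj_eq enum_val_inj) arc_rev_permE.
case: (enum_val i) (enum_val j) => [[u v] euv] [[u' v'] euv'] /=.
congr ((nat_of_bool _)%:R).
by apply/idP/eqP => [/andP[/eqP uv' /eqP vu']|/(congr1 val) [-> ->]];
  [apply: val_inj; rewrite /= uv' vu'|rewrite !eqxx].
Qed.

Lemma arc_rev_mx_invol : arc_rev_mx e *m arc_rev_mx e = 1%:M.
Proof.
rewrite arc_rev_mxE -perm_mxM -perm_mx1; congr perm_mx.
by apply/permP => i; apply: enum_val_inj; rewrite permM !arc_rev_permE arc_revK perm1.
Qed.

Lemma mxtrace_arc_rev_mx : \tr (arc_rev_mx e) = 0.
Proof.
rewrite arc_rev_mxE /mxtrace big1 // => i _; rewrite /perm_mx !mxE.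
by rewrite -(inj_eq enum_val_inj) arc_rev_permE (negbTE (arc_rev_neq _)).
Qed.

End ArcReversal.

Lemma narcs_double (n : nat) (e : rel 'I_n) :
  simple_graph e -> narcs e = (nedges e + nedges e)%N.
Proof.
case=> e_sym e_irr.
pose E := [set p : 'I_n * 'I_n | e p.1 p.2].
pose Elt := [set p : 'I_n * 'I_n | e p.1 p.2 && (p.1 < p.2)%N].
have -> : narcs e = #|E| by rewrite /narcs card_sig cardsE.
rewrite -(cardsID Elt); congr (_ + _)%N.
  by apply: eq_card => p; rewrite !inE andb_idl // => /andP[].
have -> : E :\: Elt = [set (p.2, p.1) | p in Elt].
  apply/setP => -[u v]; rewrite !inE /=; apply/idP/imsetP.
    case/andP => not_lt euv; exists (v, u); rewrite ?inE //= e_sym euv /=.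
    case: (ltngtP v u) not_lt => // [_|/val_inj eq_vu _]; first by rewrite euv.
    by move: euv; rewrite eq_vu e_irr.
  case=> -[x y]; rewrite inE /= => /andP[exy lt_xy] [-> ->].
  by rewrite e_sym exy andbT /= ltnNge ltnW.
by rewrite card_imset // => -[x y] [z w] [-> ->].
Qed.

Lemma det_scalar_add_scale_arc_rev_mx (n : nat) (e : rel 'I_n) (b : algC) :
  simple_graph e ->
  \det ('X%:M + b%:P *: map_mx polyC (arc_rev_mx e)) = ('X ^+ 2 - b%:P ^+ 2) ^+ nedges e.
Proof.
move=> e_simple; have [P P_unit T_trig] := exists_trig_conj (arc_rev_mx e).
rewrite -{1}[b%:P]opprK scaleNr (det_scalar_sub_scale_polyC P_unit T_trig).
under eq_bigr do rewrite mulNr opprK -polyCM.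
apply: prod_XaddC_sign; first exact: narcs_double.
  exact/trig_conj_diag_sqr/arc_rev_mx_invol.
by rewrite -mxtrace_trig_conj // mxtrace_arc_rev_mx.
Qed.

Theorem corollary3 (n : nat) (e : rel 'I_n)
  (Hsimple : simple_graph e) (Hconn : connected_graph e)
  (Hmn : (n <= nedges e)%N)
  (a b : algC) (d : 'M[algC]_(n, narcs e))
  (Hd : d *m adjmx d = 1%:M)
  (s : seq algC)
  (Hs : char_poly (d *m arc_rev_mx e *m adjmx d) = \prod_(mu <- s) ('X - mu%:P)) :
  let c := a - b in
  let C := a *: (adjmx d *m d) + b *: (1%:M - adjmx d *m d) in
  let U := arc_rev_mx e *m C in
  char_poly U =
    (\prod_(mu <- s)
        (('X - ((c * mu + sqrtC (c ^+ 2 * mu ^+ 2 + 4 * a * b)) / 2)%:P) *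
         ('X - ((c * mu - sqrtC (c ^+ 2 * mu ^+ 2 + 4 * a * b)) / 2)%:P)))
    * ('X - b%:P) ^+ (nedges e - n) * ('X - (- b)%:P) ^+ (nedges e - n).
Proof.
move=> c C U; set l := 'X ^+ 2 - b%:P ^+ 2.
have SS : map_mx polyC (arc_rev_mx e) *m map_mx polyC (arc_rev_mx e) = 1%:M.
  by rewrite -map_mxM arc_rev_mx_invol // map_mx1.
have DE : map_mx polyC d *m map_mx polyC (adjmx d) = 1%:M.
  by rewrite -map_mxM Hd map_mx1.
have fU : map_mx polyC U = map_mx polyC (arc_rev_mx e) *m
    (a%:P *: (map_mx polyC (adjmx d) *m map_mx polyC d)
     + b%:P *: (1%:M - map_mx polyC (adjmx d) *m map_mx polyC d)).
  by rewrite /U /C map_mxM map_mxD !map_mxZ map_mxB map_mx1 !map_mxM.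
have := det_resolvent a%:P b%:P 'X SS DE; rewrite /= -fU -!map_mxM.
rewrite -/(char_poly_mx U) -/(char_poly U) det_scalar_add_scale_arc_rev_mx // -/l.
rewrite (det_scalar_sub_scale_char_roots Hs) [in l ^+ narcs e]narcs_double //.
have l_neq0 : l != 0 by rewrite /l -rmorphXn monic_neq0 // monicXnsubC.
move=> /(mul_exp_cancel l_neq0 Hmn) ->.
have l_factor : ('X - b%:P) * ('X - (- b)%:P) = l by rewrite polyCN /l; ring.
rewrite -mulrA -exprMn l_factor; congr (_ * _); apply: eq_bigr => mu _.
rewrite -exprMn -[4 * a * b]mulrA mul_XsubC_quadratic_roots.
by rewrite /c !polyCM polyCB; ring.
Qed.
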